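(* Let $\mathcal{C}$ be a d-category. For every $\mathcal{C}$-language $L$ there exists a $\mathcal{C}$-automaton $X$ with $\mathrm{Lang}(X)=L$. (Conversely, $\mathrm{Lang}(X)$ is a $\mathcal{C}$-language for every $\mathcal{C}$-automaton $X$.)
   Context: A d-category is a small category $\mathcal{C}$ with wide subcategories $\mathcal{C}^+$ (formorphisms) and $\mathcal{C}^-$ (backmorphisms) such that an invertible $\varphi$ is in $\mathcal{C}^+$ iff $\varphi^{-1}\in\mathcal{C}^-$. A $\mathcal{C}$-automaton is a presheaf $X:\mathcal{C}^{op}\to\mathbf{Set}$ with sets of start and accept elements (elements are pairs $(U,x)$, $x\in X[U]$); morphisms of automata are presheaf maps preserving start and accept elements. A linear category is a bipointed d-category isomorphic to a finite (possibly empty) concatenation (gluing $\top$ to $\bot$) of $\mathbf S$ (formorphism $\bot\to\top$), $\mathbf T$ (backmorphism $\top\to\bot$), $\mathbf I$ (inverse pair); a path is a d-functor $\omega:\mathcal I\to\mathcal{C}$ from one; its track object is $\operatorname{colim}_i\mathcal{C}(-,\omega(i))$ with single start element the image of $\mathrm{id}_{\omega(\bot)}$ and single accept element the image of $\mathrm{id}_{\omega(\top)}$; a track object is an automaton isomorphic to such. For track objects, $\Delta\sqsubseteq\Gamma$ if there is a morphism of automata $\Delta\to\Gamma$. A $\mathcal{C}$-language is a class $L$ of track objects that is down-closed: $\Gamma\in L$ and $\Delta\sqsubseteq\Gamma$ imply $\Delta\in L$. $\mathrm{Lang}(X)$ is the class of track objects $\Gamma$ admitting a morphism of automata $\Gamma\to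 X$. *)

From Stdlib Require Import ProofIrrelevance Lia List Arith.

Record dcat := DCat {
  Ob : Type;
  Hom : Ob -> Ob -> Type;
  idm : forall a, Hom a a;
  comp : forall a b c, Hom b c -> Hom a b -> Hom a c;
  comp_idl : forall a b (f : Hom a b), comp _ _ _ (idm b) f = f;
  comp_idr : forall a b (f : Hom a b), comp _ _ _ f (idm a) = f;
  comp_assoc : forall a b c d (f : Hom a b) (g : Hom b c) (h : Hom c d),
      comp _ _ _ h (comp _ _ _ g f) = comp _ _ _ (comp _ _ _ h g) f;
  fore : forall a b, Hom a b -> Prop;
  back : forall a b, Hom a b -> Prop;
  fore_id : forall a, fore _ _ (idm a);
  fore_comp : forall a b c (f : Hom a b) (g : Hom b c),
      fore _ _ f -> fore _ _ g -> fore _ _ (comp _ _ _ g f);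
  back_id : forall a, back _ _ (idm a);
  back_comp : forall a b c (f : Hom a b) (g : Hom b c),
      back _ _ f -> back _ _ g -> back _ _ (comp _ _ _ g f);
  inv_dir : forall a b (f : Hom a b) (g : Hom b a),
      comp _ _ _ g f = idm a -> comp _ _ _ f g = idm b -> (fore _ _ f <-> back _ _ g)
}.
Arguments Hom {d0} _ _.
Arguments idm {d0} _.
Arguments comp {d0 a b c} _ _.
Arguments fore {d0 a b} _.
Arguments back {d0 a b} _.

Record dfunctor (D C : dcat) := DFun {
  fob : Ob D -> Ob C;
  fhom : forall a b, @Hom D a b -> @Hom C (fob a) (fob b);
  fhom_id : forall a, fhom _ _ (idm a) = idm (fob a);
  fhom_comp : forall a b c (f : @Hom D a b) (g : @Hom D b c),
      fhom _ _ (comp g f) = comp (fhom _ _ g) (fhom _ _ f);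
  fhom_fore : forall a b (f : @Hom D a b), fore f -> fore (fhom _ _ f);
  fhom_back : forall a b (f : @Hom D a b), back f -> back (fhom _ _ f)
}.
Arguments fob {D C} _ _.
Arguments fhom {D C} _ {a b} _.

(* S : formorphism bot -> top ; T : backmorphism top -> bot ;
   I : inverse pair (formorphism bot -> top, backmorphism top -> bot). *)
Inductive letter := LS | LT | LI.
Definition fwd (l : letter) : Prop := match l with LT => False | _ => True end.
Definition bwd (l : letter) : Prop := match l with LS => False | _ => True end.

(* The concatenation of the word w: objects 0..length w (the glued endpoints);
   it is a thin category: there is a (unique) morphism i -> j iff every segment
   between i and j can be traversed in the direction from i to j. *)
Definition LOb (w : list letter) := {i : nat | i <= length w}.
Definition LHom (w : list letter) (i j : LOb w) : Prop :=
  forall k, (proj1_sig i <= k < proj1_sig j -> fwd (nth k w LI)) /\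
            (proj1_sig j <= k < proj1_sig i -> bwd (nth k w LI)).

Lemma LHom_id w (i : LOb w) : LHom w i i.
Proof. intro k; split; intro; lia. Qed.

Lemma LHom_comp w (i j k : LOb w) : LHom w j k -> LHom w i j -> LHom w i k.
Proof.
  destruct i as [i Hi], j as [j Hj], k as [k Hk]; unfold LHom; simpl.
  intros G F m; split; intro Hm.
  - destruct (Nat.lt_ge_cases m j).
    + apply (proj1 (F m)); lia.
    + apply (proj1 (G m)); lia.
  - destruct (Nat.lt_ge_cases m j).
    + apply (proj2 (G m)); lia.
    + apply (proj2 (F m)); lia.
Qed.

Definition Lin (w : list letter) : dcat.
Proof.
  refine (@DCat (LOb w) (@LHom w) (@LHom_id w)
            (fun a b c g f => @LHom_comp w a b c g f)
            _ _ _
            (fun a b _ => proj1_sig a <= proj1_sig b)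
            (fun a b _ => proj1_sig b <= proj1_sig a)
            _ _ _ _ _);
  intros; try apply proof_irrelevance; simpl in *; try lia; tauto.
Defined.

Definition lbot (w : list letter) : Ob (Lin w) :=
  exist (fun i => i <= length w) 0 (Nat.le_0_l _).
Definition ltop (w : list letter) : Ob (Lin w) :=
  exist (fun i => i <= length w) (length w) (le_n _).

Definition path (C : dcat) (w : list letter) := dfunctor (Lin w) C.

Record presheaf (C : dcat) := PSh {
  pobj :> Ob C -> Type;
  pmap : forall U V, @Hom C U V -> pobj V -> pobj U;
  pmap_id : forall U x, pmap _ _ (idm U) x = x;
  pmap_comp : forall U V W (f : @Hom C U V) (g : @Hom C V W) x,
      pmap _ _ (comp g f) x = pmap _ _ f (pmap _ _ g x)
}.
Arguments pobj {C} _ _.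
Arguments pmap {C} _ {U V} _ _.

Definition natural {C : dcat} (P Q : presheaf C) (eta : forall U, P U -> Q U) :=
  forall U V (f : @Hom C U V) (x : P V), eta U (pmap P f x) = pmap Q f (eta V x).

Definition repr (C : dcat) (c : Ob C) : presheaf C.
Proof.
  refine (@PSh C (fun U => @Hom C U c) (fun U V f h => comp h f) _ _).
  - intros; apply comp_idr.
  - intros; apply comp_assoc.
Defined.

Record automaton (C : dcat) := Aut {
  aps :> presheaf C;
  start : forall U, aps U -> Prop;
  accept : forall U, aps U -> Prop
}.
Arguments aps {C} _.
Arguments start {C} _ _ _.
Arguments accept {C} _ _ _.

Definition aut_morphism {C : dcat} (X Y : automaton C) (eta : forall U, X U -> Y U) :=
  natural X Y eta /\
  (forall U x, start X U x -> start Y U (eta U x)) /\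
  (forall U x, accept X U x -> accept Y U (eta U x)).

Definition cocone {C : dcat} {w} (om : path C w) (P : presheaf C)
    (lam : forall i : Ob (Lin w), forall U, @Hom C U (fob om i) -> P U) :=
  (forall i, natural (repr C (fob om i)) P (lam i)) /\
  (forall i j (g : @Hom (Lin w) i j) U (h : @Hom C U (fob om i)),
      lam j U (comp (fhom om g) h) = lam i U h).

Definition is_colimit {C : dcat} {w} (om : path C w) (G : presheaf C)
    (lam : forall i : Ob (Lin w), forall U, @Hom C U (fob om i) -> G U) :=
  forall (P : presheaf C) mu, cocone om P mu ->
    exists eta : forall U, G U -> P U,
      natural G P eta /\ (forall i U h, eta U (lam i U h) = mu i U h) /\
      (forall eta' : forall U, G U -> P U, natural G P eta' ->
         (forall i U h, eta' U (lam i U h) = mu i U h) ->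
         forall U x, eta' U x = eta U x).

(* Gamma is a track object: (isomorphic to) the track object of some path,
   i.e. a colimit of C(-, omega(i)) whose unique start element is the image of
   id_{omega(bot)} and whose unique accept element is the image of id_{omega(top)}. *)
Definition track_object {C : dcat} (G : automaton C) : Prop :=
  exists w (om : path C w) lam,
    cocone om G lam /\ is_colimit om G lam /\
    (forall U (x : G U), start G U x <->
        existT (fun V => G V) U x =
        existT (fun V => G V) (fob om (lbot w)) (lam (lbot w) _ (idm _))) /\
    (forall U (x : G U), accept G U x <->
        existT (fun V => G V) U x =
        existT (fun V => G V) (fob om (ltop w)) (lam (ltop w) _ (idm _))).

Definition track_le {C : dcat} (D G : automaton C) : Prop :=
  exists eta, aut_morphism D G eta.

Definition is_language {C : dcat} (L : automaton C -> Prop) : Prop :=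
  (forall G, L G -> track_object G) /\
  (forall G D, L G -> track_object D -> track_le D G -> L D).

Definition Lang {C : dcat} (X : automaton C) : automaton C -> Prop :=
  fun G => track_object G /\ exists eta, aut_morphism G X eta.

(* Take for X the coproduct, over all paths whose track object lies in L, of one
   chosen track object in L of that path; paths form a small index type, whereas
   L itself is a proper class of automata.  Every Gamma in L is the track object
   of one of these paths, so it maps into its summand.  Conversely a track object
   is connected (a linear category is), hence a morphism from it into X lands in
   a single summand, which belongs to L; down-closure of L concludes. *)
From Stdlib Require Import List Lia Eqdep ClassicalEpsilon.

Lemma sigT_transport {A : Type} {P : A -> Type} (Q : forall a, P a -> Prop)
    a b (x : P a) (y : P b) :
  existT P a x = existT P b y -> Q b y -> Q a x.
Proof.
  intros E HQ.
  change (Q (projT1 (existT P a x)) (projT2 (existT P a x))).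
  rewrite E; exact HQ.
Qed.

Lemma sigT_fiber {A : Type} {P : A -> Type} (z : sigT P) (a : A) :
  projT1 z = a -> {y : P a | z = existT P a y}.
Proof. destruct z as [b y]; simpl; intros <-; exists y; reflexivity. Qed.

Lemma Lin_connected {B : Type} (w : list letter) (F : Ob (Lin w) -> B) :
  (forall i j (g : @Hom (Lin w) i j), F i = F j) -> forall i, F i = F (lbot w).
Proof.
  intros HF [n Hn]; induction n as [|n IH].
  - f_equal; unfold lbot; f_equal; apply proof_irrelevance.
  - rewrite <- (IH ltac:(lia)).
    assert (Hseg : forall k, n <= k < S n -> k = n) by lia.
    destruct (nth n w LI) eqn:E.
    1, 3: symmetry; apply HF; intro k; simpl; split; intro Hk; [|lia];
          rewrite (Hseg k Hk), E; exact I.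
    apply HF; intro k; simpl; split; intro Hk; [lia|].
    rewrite (Hseg k Hk), E; exact I.
Qed.

Section Automata.

Variable C : dcat.

Lemma track_le_trans (X Y Z : automaton C) :
  track_le X Y -> track_le Y Z -> track_le X Z.
Proof.
  intros [e1 [n1 [s1 a1]]] [e2 [n2 [s2 a2]]].
  exists (fun U x => e2 U (e1 U x)); split; [|split].
  - intros U V f x; rewrite n1, n2; reflexivity.
  - intros U x Hx; apply s2, s1, Hx.
  - intros U x Hx; apply a2, a1, Hx.
Qed.

Section Coproduct.

Variables (I : Type) (A : I -> automaton C).

Definition sum_presheaf : presheaf C.
Proof.
  refine (@PSh C (fun U => {i : I & A i U})
            (fun U V f z => existT _ (projT1 z) (pmap (A (projT1 z)) f (projT2 z)))
            _ _).
  - intros U [i x]; simpl; rewrite pmap_id; reflexivity.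
  - intros U V W f g [i x]; simpl; rewrite pmap_comp; reflexivity.
Defined.

Definition aut_sum : automaton C :=
  @Aut C sum_presheaf
    (fun U z => start (A (projT1 z)) U (projT2 z))
    (fun U z => accept (A (projT1 z)) U (projT2 z)).

Lemma track_le_summand (i : I) : track_le (A i) aut_sum.
Proof.
  exists (fun U x => existT _ i x); split; [|split].
  - intros U V f x; reflexivity.
  - intros U x Hx; exact Hx.
  - intros U x Hx; exact Hx.
Qed.

End Coproduct.

Definition track_of {w} (om : path C w) (G : automaton C)
    (lam : forall i : Ob (Lin w), forall U, @Hom C U (fob om i) -> G U) : Prop :=
  cocone om G lam /\ is_colimit om G lam /\
  (forall U (x : G U), start G U x <->
      existT (fun V => G V) U x =
      existT (fun V => G V) (fob om (lbot w)) (lam (lbot w) _ (idm _))) /\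
  (forall U (x : G U), accept G U x <->
      existT (fun V => G V) U x =
      existT (fun V => G V) (fob om (ltop w)) (lam (ltop w) _ (idm _))).

Section TrackObject.

Variables (w : list letter) (om : path C w) (G : automaton C)
  (lam : forall i : Ob (Lin w), forall U, @Hom C U (fob om i) -> G U).
Hypothesis track : track_of om G lam.

Lemma track_of_start : start G _ (lam (lbot w) _ (idm _)).
Proof. apply (proj1 (proj2 (proj2 track))); reflexivity. Qed.

Lemma track_of_accept : accept G _ (lam (ltop w) _ (idm _)).
Proof. apply (proj2 (proj2 (proj2 track))); reflexivity. Qed.

Lemma track_le_of_cocone (H : automaton C)
    (mu : forall i : Ob (Lin w), forall U, @Hom C U (fob om i) -> H U) :
  cocone om H mu ->
  start H _ (mu (lbot w) _ (idm _)) -> accept H _ (mu (ltop w) _ (idm _)) ->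
  track_le G H.
Proof.
  destruct track as (_ & Hcol & Hst & Hac).
  intros Hmu Hbot Htop.
  destruct (Hcol H mu Hmu) as (eta & Hnat & Hlam & _).
  exists eta; split; [exact Hnat|split].
  - intros U x Hx; apply Hst in Hx.
    apply (sigT_transport (fun V z => start H V (eta V z)) _ _ _ _ Hx).
    rewrite Hlam; exact Hbot.
  - intros U x Hx; apply Hac in Hx.
    apply (sigT_transport (fun V z => accept H V (eta V z)) _ _ _ _ Hx).
    rewrite Hlam; exact Htop.
Qed.

Lemma track_le_sum_summand (I : Type) (A : I -> automaton C) :
  track_le G (aut_sum I A) -> exists i, track_le G (A i).
Proof.
  intros [eta [Hnat [Hs Ha]]].
  destruct track as (Hco & _ & _ & _).
  set (z := fun k => eta (fob om k) (lam k _ (idm _))).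
  assert (Hz : forall k l (g : @Hom (Lin w) k l),
             z k = pmap (aut_sum I A) (fhom om g) (z l)).
  { intros k l g; unfold z; rewrite <- Hnat; f_equal.
    rewrite <- (proj1 Hco l _ _ (fhom om g) (idm _)); simpl.
    rewrite comp_idl, <- (comp_idr _ _ _ (fhom om g)).
    symmetry; apply (proj2 Hco). }
  set (i0 := projT1 (z (lbot w))).
  assert (Hcomp : forall k, projT1 (z k) = i0).
  { apply (Lin_connected w (fun k => projT1 (z k))).
    intros k l g; rewrite (Hz k l g); reflexivity. }
  exists i0.
  set (y := fun k => proj1_sig (sigT_fiber (z k) i0 (Hcomp k))).
  assert (Hy : forall k, z k = existT _ i0 (y k))
    by (intro k; exact (proj2_sig (sigT_fiber (z k) i0 (Hcomp k)))).
  apply (track_le_of_cocone (A i0) (fun k U h => pmap (A i0) h (y k))).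
  - split.
    + intros k U V f h; apply pmap_comp.
    + intros k l g U h; simpl; rewrite pmap_comp; f_equal.
      pose proof (Hz k l g) as E; rewrite (Hy k), (Hy l) in E.
      symmetry; exact (inj_pair2 _ _ _ _ _ E).
  - rewrite pmap_id.
    pose proof (Hs _ _ track_of_start) as Hst.
    fold (z (lbot w)) in Hst; rewrite (Hy (lbot w)) in Hst; exact Hst.
  - rewrite pmap_id.
    pose proof (Ha _ _ track_of_accept) as Hac.
    fold (z (ltop w)) in Hac; rewrite (Hy (ltop w)) in Hac; exact Hac.
Qed.

End TrackObject.

Section LanguageAutomaton.

Variable L : automaton C -> Prop.

Definition lpath : Type :=
  {w : list letter & {om : path C w | exists G lam, L G /\ track_of om G lam}}.

Definition lpath_word (p : lpath) : list letter := projT1 p.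
Definition lpath_path (p : lpath) : path C (lpath_word p) := proj1_sig (projT2 p).

Definition lpath_track (p : lpath) : automaton C :=
  proj1_sig (constructive_indefinite_description _ (proj2_sig (projT2 p))).

Lemma lpath_track_spec (p : lpath) :
  exists lam, L (lpath_track p) /\ track_of (lpath_path p) (lpath_track p) lam.
Proof.
  exact (proj2_sig (constructive_indefinite_description _ (proj2_sig (projT2 p)))).
Qed.

Definition language_aut : automaton C := aut_sum lpath lpath_track.

Hypothesis HL : is_language L.

Lemma language_Lang_language_aut (G : automaton C) : L G -> Lang language_aut G.
Proof.
  intro HG; pose proof (proj1 HL G HG) as HT; split; [exact HT|].
  destruct HT as (w & om & lam & Htr).
  set (p := existT _ w (exist _ om (ex_intro _ G (ex_intro _ lam (conj HG Htr))))
            : lpath).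
  destruct (lpath_track_spec p) as (lam' & _ & Htr').
  apply (track_le_trans _ (lpath_track p)); [|apply track_le_summand].
  apply (track_le_of_cocone w om G lam Htr _ lam' (proj1 Htr')).
  - exact (track_of_start _ _ _ _ Htr').
  - exact (track_of_accept _ _ _ _ Htr').
Qed.

Lemma Lang_language_aut_language (G : automaton C) : Lang language_aut G -> L G.
Proof.
  intros [HT Hle].
  destruct (HT) as (w & om & lam & Htr).
  destruct (track_le_sum_summand w om G lam Htr _ _ Hle) as [p Hp].
  destruct (lpath_track_spec p) as (_ & HLp & _).
  exact (proj2 HL _ G HLp HT Hp).
Qed.

End LanguageAutomaton.

Lemma Lang_is_language (X : automaton C) : is_language (Lang X).
Proof.
  split.
  - intros G [HG _]; exact HG.
  - intros G D [_ HG] HD HDG; split; [exact HD|].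
    exact (track_le_trans D G X HDG HG).
Qed.

End Automata.

Theorem lemma9 (C : dcat) :
  (forall L : automaton C -> Prop, is_language L ->
     exists X : automaton C, forall G : automaton C, Lang X G <-> L G) /\
  (forall X : automaton C, is_language (Lang X)).
Proof.
  split.
  - intros L HL; exists (language_aut C L); intro G; split.
    + apply Lang_language_aut_language, HL.
    + apply language_Lang_language_aut, HL.
  - apply Lang_is_language.
Qed.
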